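(* For every tree $T\subseteq\mathbb{N}^{<\mathbb{N}}$, the set $\mathcal{JT}(T)=\{J(\sigma):\sigma\in T\}$ is a tree and is computable in $T$.
   Context: A tree is a subset of $\mathbb{N}^{<\mathbb{N}}$ closed under initial segments. Finite strings of natural numbers are coded by natural numbers via a fixed computable coding in which $\sigma\subsetneq\tau$ implies code$(\sigma)<$ code$(\tau)$. For a finite string $\sigma$ and $\tau$, $\{n\}^{\tau}(n)\downarrow$ means the $n$-th Turing machine on input $n$ with oracle $\tau$ halts in fewer than $|\tau|$ steps. Set $t_{-1}=1$ and $t_n=\max\{t_{n-1}+1,\ \mu t(\{n\}^{\sigma\restriction t}(n)\downarrow)\}$ (with $t_n=t_{n-1}+1$ if no such $t$), where $\sigma\restriction t$ is the initial segment of length $\min(t,|\sigma|)$; the Jump function is $J(\sigma)=\langle\sigma\restriction t_0,\dots,\sigma\restriction t_{k-1}\rangle$, where $k$ is least with $t_k>|\sigma|$. *)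

From mathcomp Require Import all_boot.
Set Implicit Arguments. Unset Strict Implicit. Unset Printing Implicit Defensive.

(* Coding of finite strings of naturals: MathComp's Goedel coding      *)
(* CodeSeq.code : seq nat -> nat (a bijection with inverse             *)
(* CodeSeq.decode).  It satisfies: s strict prefix of t ->             *)
(* code s < code t, as required by the paper.                          *)
Definition scode : seq nat -> nat := CodeSeq.code.
Definition sdecode : nat -> seq nat := CodeSeq.decode.

Definition is_tree (A : seq nat -> Prop) : Prop :=
  forall s t : seq nat, prefix s t -> A t -> A s.

(* Model of computation: oracle register machines (Cutland's URM with  *)
(* an oracle instruction).  Registers R_0, R_1, ... hold naturals.     *)
Inductive instr :=
| IZ of nat                 (* R_a := 0 *)
| IS of nat                 (* R_a := R_a + 1 *)
| IT of nat & nat           (* R_b := R_a *)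
| IJ of nat & nat & nat     (* if R_a = R_b then goto q else next *)
| IO of nat.                (* R_a := oracle(R_a) *)

Definition program := seq instr.

Definition instr_of_nat (m : nat) : instr :=
  match sdecode m with
  | [:: 0; a] => IZ a
  | [:: 1; a] => IS a
  | [:: 2; a; b] => IT a b
  | [:: 3; a; b; q] => IJ a b q
  | [:: 4; a] => IO a
  | _ => IZ 0
  end.

Definition machine (e : nat) : program := map instr_of_nat (sdecode e).

(* An oracle is a partial function nat -> nat; a query outside its
   domain makes the computation get stuck (it never halts). *)
Definition oracle := nat -> option nat.

Definition str_oracle (tau : seq nat) : oracle :=
  fun i => if i < size tau then Some (nth 0 tau i) else None.

Definition set_oracle (T : pred (seq nat)) : oracle :=
  fun x => Some (nat_of_bool (T (sdecode x))).

(* machine state: program counter and registers *)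
Definition state := (nat * (nat -> nat))%type.

Definition init (x : nat) : state := (0, fun i => if i == 0 then x else 0).

Definition upd (r : nat -> nat) (a v : nat) : nat -> nat :=
  fun i => if i == a then v else r i.

Definition halted (p : program) (st : state) : bool := size p <= st.1.

Definition step (p : program) (o : oracle) (st : state) : option state :=
  let: (pc, r) := st in
  match nth (IZ 0) p pc with
  | IZ a => Some (pc.+1, upd r a 0)
  | IS a => Some (pc.+1, upd r a (r a).+1)
  | IT a b => Some (pc.+1, upd r b (r a))
  | IJ a b q => Some (if r a == r b then q else pc.+1, r)
  | IO a => match o (r a) with
            | Some v => Some (pc.+1, upd r a v)
            | None => None
            end
  end.

(* run p o s st = Some st' iff the computation from st halts in fewer
   than s steps, st' being the halting state. *)
Fixpoint run (p : program) (o : oracle) (s : nat) (st : state)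
  : option state :=
  match s with
  | 0 => None
  | s'.+1 =>
      if halted p st then Some st
      else match step p o st with
           | Some st' => run p o s' st'
           | None => None
           end
  end.

(* {n}^tau(n) converges: the n-th machine on input n with oracle tau
   halts in fewer than |tau| steps. *)
Definition conv (n : nat) (tau : seq nat) : bool :=
  isSome (run (machine n) (str_oracle tau) (size tau) (init n)).

(* sigma|t = take t sigma  (length min(t, |sigma|)).                   *)

(* mu t ({n}^{sigma|t}(n) converges); it suffices to search t <= |sigma|
   since sigma|t = sigma for t >= |sigma|. *)
Definition mu_t (n : nat) (sigma : seq nat) : option nat :=
  let i := find (fun t => conv n (take t sigma)) (iota 0 (size sigma).+1) in
  if i <= size sigma then Some i else None.

Definition t_step (sigma : seq nat) (prev n : nat) : nat :=
  match mu_t n sigma with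
  | Some t => maxn prev.+1 t
  | None => prev.+1
  end.

(* tseq sigma n = t_n, with t_{-1} = 1 *)
Fixpoint tseq (sigma : seq nat) (n : nat) : nat :=
  match n with
  | 0 => t_step sigma 1 0
  | n'.+1 => t_step sigma (tseq sigma n') n
  end.

(* k = least k with t_k > |sigma| (t_k >= k+2, so k <= |sigma|) *)
Definition jk (sigma : seq nat) : nat :=
  find (fun k => size sigma < tseq sigma k) (iota 0 (size sigma).+1).

(* J(sigma) = < sigma|t_0, ..., sigma|t_{k-1} > (entries are codes) *)
Definition J (sigma : seq nat) : seq nat :=
  [seq scode (take (tseq sigma i) sigma) | i <- iota 0 (jk sigma)].

Definition JT (T : pred (seq nat)) (s : seq nat) : Prop :=
  exists2 sigma, T sigma & J sigma = s.

Definition computable_in (T : pred (seq nat)) (A : seq nat -> Prop) : Prop :=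
  exists e : nat, forall x : nat, exists s st,
    run (machine e) (set_oracle T) s (init x) = Some st /\
    ((st.2 0 = 1 /\ A (sdecode x)) \/ (st.2 0 = 0 /\ ~ A (sdecode x))).

(* The stages [tseq s 0 < tseq s 1 < ...] of the jump are stable under restriction: the first
   [j.+1] stages of [s] only depend on [take (tseq s j) s], hence
   [J (take (tseq s j) s) = take j.+1 (J s)]. Since [T] is a tree, every prefix of [J s] is
   again the jump of an element of [T], so [JT T] is a tree.
   The same identity, taken at the last stage, says that a nonempty [u] lies in [JT T] iff the
   string coded by the last entry of [u] lies in [T] and has jump [u]. This test only runs
   machines for a bounded number of steps, so it is computable relative to [T]: we write it in a
   small language of bounded iterations with an oracle and compile that language to oracle
   register machines. *)

From mathcomp Require Import all_boot.
From Stdlib Require Import Lia.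
From mathcomp Require Import zify.
Set Implicit Arguments. Unset Strict Implicit. Unset Printing Implicit Defensive.

(** * Restriction and the jump *)

Lemma sdecodeK : cancel scode sdecode.
Proof. exact: CodeSeq.codeK. Qed.

Lemma scodeK : cancel sdecode scode.
Proof. exact: CodeSeq.decodeK. Qed.

Section FindIota.
Variables (P : pred nat) (n : nat).

Lemma find_iota_le : find P (iota 0 n) <= n.
Proof. by rewrite -{2}(size_iota 0 n) find_size. Qed.

Lemma nth_find_iota : find P (iota 0 n) < n -> P (find P (iota 0 n)).
Proof.
move=> lt_n; have hasP : has P (iota 0 n) by rewrite has_find size_iota.
by have := nth_find 0 hasP; rewrite nth_iota.
Qed.

Lemma before_find_iota k : k < find P (iota 0 n) -> P k = false.
Proof.
move=> lt_k; have := before_find 0 lt_k; rewrite nth_iota //.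
exact: leq_trans lt_k find_iota_le.
Qed.

Lemma find_iota_eq m :
  m < n -> P m -> (forall k, k < m -> P k = false) -> find P (iota 0 n) = m.
Proof.
move=> lt_mn Pm before_m.
case: (ltngtP (find P (iota 0 n)) m) => // lt_find.
- by have := before_m _ lt_find; rewrite nth_find_iota // (ltn_trans lt_find).
- by have := before_find_iota lt_find; rewrite Pm.
Qed.

Lemma find_iota_none : (forall k, k < n -> P k = false) -> find P (iota 0 n) = n.
Proof.
move=> noP; apply/eqP; rewrite eqn_leq find_iota_le leqNgt /=.
by apply/negP => lt_find; have := nth_find_iota lt_find; rewrite noP.
Qed.

End FindIota.

Lemma eq_find_iota (P Q : pred nat) n :
  (forall k, k < n -> P k = Q k) -> find P (iota 0 n) = find Q (iota 0 n).
Proof. by move=> PQ; apply: eq_in_find => x; rewrite mem_iota => /andP [_]; apply: PQ. Qed.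

Lemma t_step_gt s p n : p < t_step s p n.
Proof. by rewrite /t_step; case: (mu_t n s) => // t; rewrite leq_max leqnn. Qed.

Lemma tseq_ltS s n : tseq s n < tseq s n.+1.
Proof. exact: t_step_gt. Qed.

Lemma tseq_ge s n : n + 2 <= tseq s n.
Proof.
elim: n => [|n IHn] /=; first exact: t_step_gt.
by apply: leq_trans (t_step_gt _ _ _); rewrite addSn ltnS.
Qed.

Lemma leq_tseq s i j : i <= j -> tseq s i <= tseq s j.
Proof.
move=> /subnK <-; elim: (j - i) => // d IHd.
by apply: leq_trans IHd _; rewrite addSn; exact: ltnW (tseq_ltS _ _).
Qed.

Definition mu_find n s := find (fun t => conv n (take t s)) (iota 0 (size s).+1).

Lemma mu_tE n s : mu_t n s = if mu_find n s <= size s then Some (mu_find n s) else None.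
Proof. by []. Qed.

Lemma mu_t_take n s L : L <= size s ->
  mu_t n (take L s) = if mu_find n s <= L then Some (mu_find n s) else None.
Proof.
move=> le_L; rewrite mu_tE size_takel //.
pose C t := conv n (take t s).
have -> : mu_find n (take L s) = find C (iota 0 L.+1).
  by rewrite /mu_find size_takel //; apply: eq_find_iota => k lt_k; rewrite take_takel.
case: (leqP (mu_find n s) L) => [le_mu|lt_mu].
- rewrite (@find_iota_eq C _ (mu_find n s)) ?le_mu ?ltnS //.
    by apply: (@nth_find_iota C (size s).+1); rewrite ltnS (leq_trans le_mu).
  by move=> k; apply: (@before_find_iota C (size s).+1).
- rewrite (@find_iota_none C) ?ltnn // => k lt_k.
  by apply: (@before_find_iota C (size s).+1); apply: leq_trans lt_mu.
Qed.

Lemma t_step_take s L p n : L <= size s -> t_step s p n <= L ->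
  t_step (take L s) p n = t_step s p n.
Proof.
move=> le_L; rewrite /t_step mu_t_take // mu_tE.
case: (leqP (mu_find n s) L) => [le_mu|lt_mu]; first by rewrite (leq_trans le_mu le_L).
by case: ifP => // _; rewrite geq_max => /andP [_ ?]; lia.
Qed.

Lemma tseq_take s j : tseq s j <= size s ->
  forall i, i <= j -> tseq (take (tseq s j) s) i = tseq s i.
Proof.
move=> le_j; elim=> [|i IHi] le_i /=; first exact/t_step_take/(leq_tseq s (leq0n j)).
by rewrite IHi ?(ltnW le_i) // t_step_take // (leq_tseq s le_i).
Qed.

Lemma jk_le s : jk s <= size s.
Proof.
have : has (fun k => size s < tseq s k) (iota 0 (size s).+1).
  by apply/hasP; exists (size s); [rewrite mem_iota | have := tseq_ge s (size s)]; lia.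
by rewrite has_find size_iota ltnS.
Qed.

Lemma tseq_le_size s j : j < jk s -> tseq s j <= size s.
Proof. by move/before_find_iota/negbT; rewrite -leqNgt. Qed.

Lemma jk_take s j : j < jk s -> jk (take (tseq s j) s) = j.+1.
Proof.
move=> lt_j; have le_j := tseq_le_size lt_j.
rewrite /jk size_takel //; apply: find_iota_eq.
- by have := tseq_ge s j; lia.
- by rewrite /= tseq_take //; exact: t_step_gt.
- move=> k lt_k; rewrite (tseq_take le_j (_ : k <= j)); last lia.
  by apply/negbTE; rewrite -leqNgt leq_tseq.
Qed.

Lemma size_J s : size (J s) = jk s.
Proof. by rewrite size_map size_iota. Qed.

Lemma J_take s j : j < jk s -> J (take (tseq s j) s) = take j.+1 (J s).
Proof.
move=> lt_j; rewrite /J jk_take // -map_take take_iota (minn_idPl lt_j).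
apply/eq_in_map => i; rewrite mem_iota ltnS => /andP [_ le_i].
by rewrite (tseq_take (tseq_le_size lt_j) le_i) take_takel // leq_tseq.
Qed.

Lemma J_nil : J [::] = [::].
Proof. by rewrite /J (_ : jk [::] = 0) //; apply: find_iota_eq => //=; have := tseq_ge [::] 0. Qed.

Lemma JT_tree (T : pred (seq nat)) : is_tree T -> is_tree (JT T).
Proof.
move=> treeT s t /[dup] pre_st; rewrite prefixE => /eqP s_def [sg Tsg Jsg].
have : size s <= jk sg by rewrite -size_J Jsg -s_def size_take; case: ifP => //; lia.
case s_size: (size s) s_def => [|j] s_def le_s.
- by exists [::]; [apply: treeT Tsg; rewrite prefixE take0 | rewrite J_nil -s_def take0].
- exists (take (tseq sg j) sg); first by apply: treeT Tsg; exact: prefix_take.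
  by rewrite J_take // -s_def Jsg.
Qed.

Definition JT_dec (T : pred (seq nat)) (x : nat) : bool :=
  if sdecode x is [::] then T [::]
  else T (sdecode (last 0 (sdecode x))) && (J (sdecode (last 0 (sdecode x))) == sdecode x).

Lemma JT_decP (T : pred (seq nat)) x : is_tree T -> JT_dec T x <-> JT T (sdecode x).
Proof.
move=> treeT; rewrite /JT_dec; case x_def: (sdecode x) => [|a l].
  split=> [Tnil|[sg Tsg _]]; first by exists [::]; rewrite ?J_nil.
  by apply: treeT Tsg; rewrite prefixE take0.
split=> [/andP [? /eqP ?]|[sg Tsg Jsg]]; first by exists (sdecode (last 0 (a :: l))).
have lt_last : (jk sg).-1 < jk sg by rewrite prednK // -size_J Jsg.
have -> : last 0 (a :: l) = scode (take (tseq sg (jk sg).-1) sg).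
  by rewrite -nth_last -Jsg size_J /J (nth_map 0) ?size_iota // nth_iota.
rewrite sdecodeK J_take // prednK; last exact: leq_ltn_trans lt_last.
by rewrite -size_J take_size Jsg (treeT _ sg) ?prefix_take ?eqxx.
Qed.

(** * Compiling bounded-iteration expressions to register machines *)

Inductive expr :=
| EVar of nat
| EZero
| ESucc of expr
| EOracle of expr
| ELet of expr & expr
| EIf of expr & expr & expr & expr
| EIter of expr & expr & expr
| ECall of expr & expr & expr & expr & expr.

Fixpoint eval (g : nat -> nat) (env : seq nat) (e : expr) : nat :=
  match e with
  | EVar k => nth 0 env k
  | EZero => 0
  | ESucc e => (eval g env e).+1
  | EOracle e => g (eval g env e)
  | ELet e1 e2 => eval g (eval g env e1 :: env) e2
  | EIf e1 e2 e3 e4 =>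
      if eval g env e1 == eval g env e2 then eval g env e3 else eval g env e4
  | EIter n a b => iteri (eval g env n) (fun i acc => eval g [:: acc, i & env] b) (eval g env a)
  | ECall m a1 a2 a3 a4 =>
      eval g [:: eval g env a1; eval g env a2; eval g env a3; eval g env a4] m
  end.

Fixpoint code_size e :=
  match e with
  | EVar _ | EZero => 1
  | ESucc e | EOracle e => code_size e + 1
  | ELet e1 e2 => code_size e1 + code_size e2 + 1
  | EIf e1 e2 e3 e4 => code_size e1 + code_size e2 + 1 + code_size e4 + 1 + code_size e3
  | EIter n a b => code_size n + code_size a + 2 + (code_size b + 4)
  | ECall m a1 a2 a3 a4 =>
      code_size a1 + code_size a2 + code_size a3 + code_size a4 + code_size m + 1
  end.

(* Loop over the counter [f.+2] up to the bound [f.+1], with accumulator [f];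
   [c] computes the next accumulator into [f.+3]. *)
Definition loop_code f bl (c : program) : program :=
  [:: IJ f.+2 f.+1 (bl + (size c + 4))] ++ c ++ [:: IT f.+3 f; IS f.+2; IJ 0 0 bl].

(* [compile e rs f b] stores the value of [e] in register [f], reading variable [k] from
   register [nth k rs], using only registers [>= f] as scratch space; it expects to be
   placed at address [b] since jumps are absolute. *)
Fixpoint compile (e : expr) (rs : seq nat) (f b : nat) : program :=
  match e with
  | EVar k => [:: if k < size rs then IT (nth 0 rs k) f else IZ f]
  | EZero => [:: IZ f]
  | ESucc e => compile e rs f b ++ [:: IS f]
  | EOracle e => compile e rs f b ++ [:: IO f]
  | ELet e1 e2 =>
      compile e1 rs f b ++ compile e2 (f :: rs) f.+1 (b + code_size e1) ++ [:: IT f.+1 f]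
  | EIf e1 e2 e3 e4 =>
      let b2 := b + code_size e1 in let b4 := b2 + code_size e2 + 1 in
      let b3 := b4 + code_size e4 + 1 in
      compile e1 rs f b ++ compile e2 rs f.+1 b2 ++ [:: IJ f f.+1 b3] ++ compile e4 rs f b4
        ++ [:: IJ 0 0 (b3 + code_size e3)] ++ compile e3 rs f b3
  | EIter n a body =>
      let ba := b + code_size n in let bl := ba + code_size a + 2 in
      compile n rs f.+1 b ++ compile a rs f.+2 ba ++ [:: IT f.+2 f; IZ f.+2]
        ++ loop_code f bl (compile body [:: f, f.+2 & rs] f.+3 bl.+1)
  | ECall m a1 a2 a3 a4 =>
      let b2 := b + code_size a1 in let b3 := b2 + code_size a2 in
      let b4 := b3 + code_size a3 in let bm := b4 + code_size a4 in
      compile a1 rs f b ++ compile a2 rs f.+1 b2 ++ compile a3 rs f.+2 b3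
        ++ compile a4 rs f.+3 b4 ++ compile m [:: f; f.+1; f.+2; f.+3] f.+4 bm ++ [:: IT f.+4 f]
  end.

Lemma size_compile e rs f b : size (compile e rs f b) = code_size e.
Proof.
elim: e rs f b => //= *; rewrite /loop_code;
repeat (rewrite size_cat /= ||
        match goal with IH : forall _ _ _, size (compile _ _ _ _) = _ |- _ => rewrite !IH; clear IH end);
lia.
Qed.

Inductive reaches (p : program) (o : oracle) : state -> state -> Prop :=
| reaches_refl st : reaches p o st st
| reaches_step st st' st'' :
    ~~ halted p st -> step p o st = Some st' -> reaches p o st' st'' -> reaches p o st st''.

Lemma reaches_trans p o s1 s2 s3 : reaches p o s1 s2 -> reaches p o s2 s3 -> reaches p o s1 s3.
Proof. by elim=> // st st' st'' ? ? _ IH /IH; apply: reaches_step. Qed.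

Lemma run_of_reaches p o st st' :
  reaches p o st st' -> halted p st' -> exists s, run p o s st = Some st'.
Proof.
elim=> [st0 halt0|st0 st1 st2 live0 step0 _ IH /IH [s run1]]; first by exists 1; rewrite /= halt0.
by exists s.+1; rewrite /= (negbTE live0) step0.
Qed.

Definition code_at (p : program) b (c : program) :=
  exists pre post, p = pre ++ c ++ post /\ size pre = b.

Lemma code_at_catl p b c1 c2 : code_at p b (c1 ++ c2) -> code_at p b c1.
Proof. by case=> pre [post [-> <-]]; exists pre, (c2 ++ post); rewrite -catA. Qed.

Lemma code_at_catr p b c1 c2 : code_at p b (c1 ++ c2) -> code_at p (b + size c1) c2.
Proof. by case=> pre [post [-> <-]]; exists (pre ++ c1), post; rewrite -!catA size_cat. Qed.

Lemma code_at_head p b i c : code_at p b (i :: c) -> code_at p b [:: i].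
Proof. exact: (@code_at_catl _ _ [:: i] c). Qed.

Lemma code_at_behead p b i c : code_at p b (i :: c) -> code_at p (b + 1) c.
Proof. exact: (@code_at_catr _ _ [:: i] c). Qed.

Lemma code_at_compile p b e rs f c :
  code_at p b (compile e rs f b ++ c) -> code_at p (b + code_size e) c.
Proof. by move/code_at_catr; rewrite size_compile. Qed.

Lemma code_at_nth p b i : code_at p b [:: i] -> nth (IZ 0) p b = i /\ b < size p.
Proof.
case=> pre [post [-> <-]]; rewrite nth_cat ltnn subnn size_cat /=.
by rewrite addnS ltnS leq_addr.
Qed.

Definition exec_instr (o : oracle) (i : instr) (st : state) : option state :=
  let: (pc, r) := st in
  match i with
  | IZ a => Some (pc.+1, upd r a 0)
  | IS a => Some (pc.+1, upd r a (r a).+1)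
  | IT a b => Some (pc.+1, upd r b (r a))
  | IJ a b q => Some (if r a == r b then q else pc.+1, r)
  | IO a => if o (r a) is Some v then Some (pc.+1, upd r a v) else None
  end.

Lemma stepE p o st : step p o st = exec_instr o (nth (IZ 0) p st.1) st.
Proof. by case: st. Qed.

Lemma reaches_instr p o st b r i st' : reaches p o st (b, r) -> code_at p b [:: i] ->
  exec_instr o i (b, r) = Some st' -> reaches p o st st'.
Proof.
move=> reach_b /code_at_nth [pi lt_b] exec_i; apply: reaches_trans reach_b _.
by apply: reaches_step (reaches_refl _ _ _); rewrite ?stepE ?pi // /halted -ltnNge.
Qed.

Arguments upd : simpl never.

Lemma updE (r : nat -> nat) a v j : upd r a v j = if j == a then v else r j.
Proof. by []. Qed.

Lemma upd_lt (r : nat -> nat) a v j : j < a -> upd r a v j = r j.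
Proof. by rewrite updE => /ltn_eqF ->. Qed.

Lemma upd_gt (r : nat -> nat) a v j : a < j -> upd r a v j = r j.
Proof. by rewrite updE eq_sym => /ltn_eqF ->. Qed.

Lemma eq_map_below (r r' : nat -> nat) rs f : all (fun x => x < f) rs ->
  (forall j, j < f -> r' j = r j) -> map r' rs = map r rs.
Proof. by move=> /allP lt_rs agree; apply/eq_in_map => x /lt_rs /agree. Qed.

Lemma all_ltnW (rs : seq nat) m n : m <= n -> all (fun x => x < m) rs -> all (fun x => x < n) rs.
Proof. by move=> le_mn /allP lt_rs; apply/allP => x /lt_rs /leq_trans; apply. Qed.

Section Compiler.
Variable g : nat -> nat.
Let og : oracle := fun x => Some (g x).

Definition compile_spec e := forall rs f b r p, all (fun x => x < f) rs ->
  code_at p b (compile e rs f b) ->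
  exists r', [/\ reaches p og (b, r) (b + code_size e, r'), r' f = eval g (map r rs) e
                & forall j, j < f -> r' j = r j].

Lemma compile_var k : compile_spec (EVar k).
Proof.
move=> rs f b r p _ /=; rewrite addn1; case: ltnP => lt_k at_b.
  exists (upd r f (r (nth 0 rs k))); split; first exact: reaches_instr (reaches_refl _ _ _) at_b _.
    by rewrite updE eqxx (nth_map 0).
  by move=> j; apply: upd_lt.
exists (upd r f 0); split; first exact: reaches_instr (reaches_refl _ _ _) at_b _.
  by rewrite updE eqxx nth_default // size_map.
by move=> j; apply: upd_lt.
Qed.

Lemma compile_zero : compile_spec EZero.
Proof.
move=> rs f b r p _ at_b; exists (upd r f 0); split; last by move=> j; apply: upd_lt.
  by rewrite addn1; exact: reaches_instr (reaches_refl _ _ _) at_b _.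
by rewrite updE eqxx.
Qed.

Lemma compile_succ e : compile_spec e -> compile_spec (ESucc e).
Proof.
move=> IHe rs f b r p lt_rs /= at_b.
have [r1 [reach1 val1 agree1]] := IHe rs f b r p lt_rs (code_at_catl at_b).
exists (upd r1 f (r1 f).+1); split; last by move=> j lt_j; rewrite upd_lt ?agree1.
  by rewrite addnA addn1; exact: reaches_instr reach1 (code_at_compile at_b) _.
by rewrite updE eqxx val1.
Qed.

Lemma compile_oracle e : compile_spec e -> compile_spec (EOracle e).
Proof.
move=> IHe rs f b r p lt_rs /= at_b.
have [r1 [reach1 val1 agree1]] := IHe rs f b r p lt_rs (code_at_catl at_b).
exists (upd r1 f (g (r1 f))); split; last by move=> j lt_j; rewrite upd_lt ?agree1.
  by rewrite addnA addn1; exact: reaches_instr reach1 (code_at_compile at_b) _.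
by rewrite updE eqxx val1.
Qed.

Lemma compile_let e1 e2 : compile_spec e1 -> compile_spec e2 -> compile_spec (ELet e1 e2).
Proof.
move=> IH1 IH2 rs f b r p lt_rs /= at_b.
have [r1 [reach1 val1 agree1]] := IH1 rs f b r p lt_rs (code_at_catl at_b).
have at2 := code_at_compile at_b.
have lt_rs2 : all (fun x => x < f.+1) (f :: rs) by rewrite /= ltnSn (all_ltnW (leqnSn f) lt_rs).
have [r2 [reach2 val2 agree2]] := IH2 _ _ _ r1 p lt_rs2 (code_at_catl at2).
exists (upd r2 f (r2 f.+1)); split.
- rewrite !addnA addn1; exact: reaches_instr (reaches_trans reach1 reach2) (code_at_compile at2) _.
- by rewrite updE eqxx val2 /= val1 (eq_map_below lt_rs agree1).
- by move=> j lt_j; rewrite upd_lt // agree2 ?agree1 //; lia.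
Qed.

Lemma compile_if e1 e2 e3 e4 : compile_spec e1 -> compile_spec e2 -> compile_spec e3 ->
  compile_spec e4 -> compile_spec (EIf e1 e2 e3 e4).
Proof.
move=> IH1 IH2 IH3 IH4 rs f b r p lt_rs /= at_b.
set b3 := b + code_size e1 + code_size e2 + 1 + code_size e4 + 1 in at_b *.
have [r1 [reach1 val1 agree1]] := IH1 rs f b r p lt_rs (code_at_catl at_b).
have at2 := code_at_compile at_b.
have [r2 [reach2 val2 agree2]] := IH2 rs f.+1 _ r1 p (all_ltnW (leqnSn f) lt_rs) (code_at_catl at2).
have at_jump := code_at_compile at2.
have at4 := code_at_behead at_jump.
have [r4 [reach4 val4 agree4]] := IH4 rs f _ r2 p lt_rs (code_at_catl at4).
have at_exit := code_at_compile at4.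
have [r3 [reach3 val3 agree3]] := IH3 rs f b3 r2 p lt_rs (code_at_behead at_exit).
have map2 : map r2 rs = map r rs.
  by rewrite (eq_map_below (all_ltnW (leqnSn f) lt_rs) agree2) (eq_map_below lt_rs agree1).
have test : (r2 f == r2 f.+1) = (eval g (map r rs) e1 == eval g (map r rs) e2).
  by rewrite agree2 // val1 val2 (eq_map_below lt_rs agree1).
have reach12 := reaches_trans reach1 reach2.
case: ifP test => test_e test.
- exists r3; split; last by move=> j lt_j; rewrite agree3 // agree2 ?agree1 //; lia.
    apply: reaches_trans (reaches_instr reach12 (code_at_head at_jump) _) _.
      by rewrite /= test.
    by rewrite (_ : _ + _ = b3 + code_size e3) // /b3; lia.
  by rewrite val3 map2.
- have reach_else : reaches p og (b, r) (b + code_size e1 + code_size e2 + 1, r2).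
    by apply: reaches_instr reach12 (code_at_head at_jump) _; rewrite /= test addn1.
  exists r4; split; last by move=> j lt_j; rewrite agree4 // agree2 ?agree1 //; lia.
    apply: reaches_instr (reaches_trans reach_else reach4) (code_at_head at_exit) _.
    by rewrite /= eqxx /b3; congr (Some (_, _)); lia.
  by rewrite val4 map2.
Qed.

Section Loop.
Variables (body : expr) (rs : seq nat) (f bl : nat) (p : program) (r : nat -> nat) (N A : nat).
Hypotheses (IHbody : compile_spec body) (lt_rs : all (fun x => x < f) rs)
  (at_loop : code_at p bl (loop_code f bl (compile body [:: f, f.+2 & rs] f.+3 bl.+1))).
Let F i acc := eval g [:: acc, i & map r rs] body.

Lemma reaches_loop k rk : k <= N -> rk f.+2 = k -> rk f.+1 = N -> rk f = iteri k F A ->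
  (forall j, j < f -> rk j = r j) ->
  exists r', [/\ reaches p og (bl, rk) (bl + (code_size body + 4), r'), r' f = iteri N F A
               & forall j, j < f -> r' j = r j].
Proof.
have at_test := code_at_head at_loop.
have at_body := code_at_behead at_loop; rewrite addn1 in at_body.
have at_next := code_at_compile at_body.
have at_incr := code_at_behead at_next; have at_back := code_at_behead at_incr.
have lt_rs' : all (fun x => x < f.+3) [:: f, f.+2 & rs].
  by rewrite /= (all_ltnW (leq_addl 3 f) lt_rs) andbT; apply/andP; split; lia.
move=> le_kN; have [m ->] : exists m, N = k + m by exists (N - k); lia.
elim: m k rk {le_kN} => [|m IHm] k rk count bound acc agree.
  exists rk; split; rewrite ?addn0 //.
  by apply: reaches_instr (reaches_refl _ _ _) at_test _; rewrite /= count bound addn0 eqxx size_compile.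
have enter : reaches p og (bl, rk) (bl.+1, rk).
  apply: reaches_instr (reaches_refl _ _ _) at_test _.
  by rewrite /= count bound (_ : (k == k + m.+1) = false) //; lia.
have [rb [reach_b val_b agree_b]] := IHbody rk lt_rs' (code_at_catl at_body).
pose rn := upd (upd rb f (rb f.+3)) f.+2 (rb f.+2).+1.
have count_n : rn f.+2 = k.+1 by rewrite /rn updE eqxx agree_b ?count.
have bound_n : rn f.+1 = k + m.+1 by rewrite /rn upd_lt // upd_gt // agree_b.
have acc_n : rn f = iteri k.+1 F A.
  by rewrite /rn upd_lt // updE eqxx val_b /= acc count (eq_map_below lt_rs agree).
have agree_n : forall j, j < f -> rn j = r j.
  by move=> j lt_j; rewrite /rn !upd_lt ?agree_b ?agree //; lia.
rewrite -addSnnS in bound_n *.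
have [r' [reach' val' agree']] := IHm k.+1 rn count_n bound_n acc_n agree_n.
have copy : reaches p og (bl, rk) (bl.+1 + code_size body + 1, upd rb f (rb f.+3)).
  by apply: reaches_instr (reaches_trans enter reach_b) (code_at_head at_next) _; rewrite /= addn1.
have incr : reaches p og (bl, rk) (bl.+1 + code_size body + 1 + 1, rn).
  by apply: reaches_instr copy (code_at_head at_incr) _; rewrite /= upd_gt // !addn1.
exists r'; split=> //; apply: reaches_trans reach'.
by apply: reaches_instr incr (code_at_head at_back) _; rewrite /= eqxx.
Qed.

End Loop.

Lemma compile_iter en ea eb : compile_spec en -> compile_spec ea -> compile_spec eb ->
  compile_spec (EIter en ea eb).
Proof.
move=> IHn IHa IHb rs f b r p lt_rs /= at_b.
have [r1 [reach1 val1 agree1]] := IHn rs f.+1 b r p (all_ltnW (leqnSn f) lt_rs) (code_at_catl at_b).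
have at_a := code_at_compile at_b.
have [r2 [reach2 val2 agree2]] :=
  IHa rs f.+2 _ r1 p (all_ltnW (leq_addl 2 f) lt_rs) (code_at_catl at_a).
have at_init := code_at_compile at_a.
have at_loop := @code_at_catr _ _ [:: IT f.+2 f; IZ f.+2] _ at_init.
set bl := b + code_size en + code_size ea + 2 in at_loop.
pose r3 := upd (upd r2 f (r2 f.+2)) f.+2 0.
have init : reaches p og (b, r) (bl, r3).
  apply: reaches_instr (code_at_head (code_at_behead at_init)) _; last by rewrite /= /bl -addnS.
  by apply: reaches_instr (reaches_trans reach1 reach2) (code_at_head at_init) _; rewrite /= addn1.
have map1 : map r1 rs = map r rs by apply: eq_map_below (all_ltnW (leqnSn f) lt_rs) agree1.
have count3 : r3 f.+2 = 0 by rewrite /r3 updE eqxx.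
have bound3 : r3 f.+1 = eval g (map r rs) en by rewrite /r3 upd_lt // upd_gt // agree2 // val1.
have acc3 : r3 f = eval g (map r rs) ea by rewrite /r3 upd_lt // updE eqxx val2 map1.
have agree3 : forall j, j < f -> r3 j = r j.
  by move=> j lt_j; rewrite /r3 !upd_lt ?agree2 ?agree1 //; lia.
have [r' [reach' val' agree']] :=
  reaches_loop IHb lt_rs at_loop (leq0n _) count3 bound3 acc3 agree3.
exists r'; split=> //.
have -> : b + (code_size en + code_size ea + 2 + (code_size eb + 4)) = bl + (code_size eb + 4).
  by rewrite /bl !addnA.
exact: reaches_trans init reach'.
Qed.

Lemma compile_call m a1 a2 a3 a4 : compile_spec m -> compile_spec a1 -> compile_spec a2 ->
  compile_spec a3 -> compile_spec a4 -> compile_spec (ECall m a1 a2 a3 a4).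
Proof.
move=> IHm IH1 IH2 IH3 IH4 rs f b r p lt_rs /= at_b.
have lt_rs1 := all_ltnW (leqnSn f) lt_rs.
have lt_rs2 := all_ltnW (leq_addl 2 f) lt_rs.
have lt_rs3 := all_ltnW (leq_addl 3 f) lt_rs.
have [r1 [reach1 val1 agree1]] := IH1 rs f b r p lt_rs (code_at_catl at_b).
have at2 := code_at_compile at_b.
have [r2 [reach2 val2 agree2]] := IH2 rs f.+1 _ r1 p lt_rs1 (code_at_catl at2).
have at3 := code_at_compile at2.
have [r3 [reach3 val3 agree3]] := IH3 rs f.+2 _ r2 p lt_rs2 (code_at_catl at3).
have at4 := code_at_compile at3.
have [r4 [reach4 val4 agree4]] := IH4 rs f.+3 _ r3 p lt_rs3 (code_at_catl at4).
have at_m := code_at_compile at4.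
have lt_args : all (fun x => x < f.+4) [:: f; f.+1; f.+2; f.+3] by rewrite /=; lia.
have [r5 [reach5 val5 agree5]] := IHm _ f.+4 _ r4 p lt_args (code_at_catl at_m).
have map1 : map r1 rs = map r rs by apply: eq_map_below lt_rs agree1.
have map2 : map r2 rs = map r rs by rewrite (eq_map_below lt_rs1 agree2).
have map3 : map r3 rs = map r rs by rewrite (eq_map_below lt_rs2 agree3).
exists (upd r5 f (r5 f.+4)); split.
- have reach15 := reaches_trans reach1 (reaches_trans reach2 (reaches_trans reach3
    (reaches_trans reach4 reach5))).
  by apply: reaches_instr reach15 (code_at_compile at_m) _; rewrite /=; congr (Some (_, _)); lia.
- rewrite updE eqxx val5 /=; congr (eval _ [:: _; _; _; _] _).
  + rewrite agree4 ?agree3 ?agree2 ?val1 //; lia.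
  + rewrite agree4 ?agree3 ?val2 ?map1 //; lia.
  + rewrite agree4 ?val3 ?map2 //; lia.
  + by rewrite val4 map3.
- by move=> j lt_j; rewrite upd_lt // agree5 ?agree4 ?agree3 ?agree2 ?agree1 //; lia.
Qed.

Theorem compile_correct e : compile_spec e.
Proof.
elim: e => *; [exact: compile_var | exact: compile_zero | exact: compile_succ
  | exact: compile_oracle | exact: compile_let | exact: compile_if | exact: compile_iter
  | exact: compile_call].
Qed.

End Compiler.

Definition nat_of_instr (i : instr) : nat :=
  match i with
  | IZ a => scode [:: 0; a]
  | IS a => scode [:: 1; a]
  | IT a b => scode [:: 2; a; b]
  | IJ a b q => scode [:: 3; a; b; q]
  | IO a => scode [:: 4; a]
  end.

Lemma nat_of_instrK : cancel nat_of_instr instr_of_nat.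
Proof. by case=> *; rewrite /nat_of_instr /instr_of_nat sdecodeK. Qed.

Lemma machine_code (p : program) : machine (scode (map nat_of_instr p)) = p.
Proof. by rewrite /machine sdecodeK -map_comp (eq_map nat_of_instrK) map_id. Qed.

Definition query (T : pred (seq nat)) (y : nat) : nat := T (sdecode y).

Lemma computable_in_of_eval T (A : seq nat -> Prop) e (dec : nat -> bool) :
  (forall x, eval (query T) [:: x] e = dec x) -> (forall x, dec x <-> A (sdecode x)) ->
  computable_in T A.
Proof.
move=> eval_e decP; pose p := compile e [:: 0] 1 0 ++ [:: IT 1 0].
exists (scode (map nat_of_instr p)) => x; rewrite machine_code.
have at_e : code_at p 0 (compile e [:: 0] 1 0) by exists [::], [:: IT 1 0].
have [r [reach_e val_e _]] := compile_correct (query T) (init x).2 (isT : all (fun y => y < 1) [:: 0]) at_e.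
have at_out : code_at p (code_size e) [:: IT 1 0].
  by exists (compile e [:: 0] 1 0), [::]; rewrite size_compile.
have [|s run_p] := run_of_reaches (reaches_instr reach_e at_out (erefl _)).
  by rewrite /halted /p size_cat size_compile addn1.
exists s; eexists; split; first exact: run_p.
rewrite /= updE eqxx val_e eval_e; have := decP x.
by case: (dec x) => [[/(_ isT) ?]|[_ notA]]; [left | right; split=> // /notA].
Qed.

(** * Arithmetic and sequence codes *)

Fixpoint enat n := if n is n'.+1 then ESucc (enat n') else EZero.

Notation v0 := (EVar 0).
Notation v1 := (EVar 1).
Notation v2 := (EVar 2).
Notation v3 := (EVar 3).
Notation v4 := (EVar 4).
Notation v5 := (EVar 5).
Notation call1 m a := (ECall m a EZero EZero EZero).
Notation call2 m a b := (ECall m a b EZero EZero).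
Notation call3 m a b c := (ECall m a b c EZero).

Definition epred := locked (EIter v0 EZero v1).
Definition eadd := locked (EIter v1 v0 (ESucc v0)).
Definition esub := locked (EIter v1 v0 (call1 epred v0)).
Definition emul := locked (EIter v1 EZero (call2 eadd v0 v2)).
Definition eleq := locked (EIf (call2 esub v0 v1) EZero (enat 1) EZero).
Definition eexp2 := locked (EIter v0 (enat 1) (call2 eadd v0 v0)).
(* [x %/ y] counts the [i < x] with [i.+1 * y <= x] *)
Definition ediv :=
  locked (EIter v0 EZero (EIf (call2 eleq (call2 emul (ESucc v1) v3) v2) (enat 1) (ESucc v0) v0)).
Definition emod := locked (call2 esub v0 (call2 emul v1 (call2 ediv v0 v1))).
Definition emax := locked (call2 eadd v0 (call2 esub v1 v0)).
Definition emin := locked (call2 esub v0 (call2 esub v0 v1)).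

Lemma iteri_count (P : pred nat) n f :
  (forall i a, f i a = if P i then a.+1 else a) -> iteri n f 0 = count P (iota 0 n).
Proof.
move=> fE; elim: n => // n IHn; rewrite iteriS fE IHn -[n.+1]addn1 iotaD count_cat /=.
by case: (P n); rewrite ?addn1 ?addn0.
Qed.

Lemma count_ltn_iota m n : count (fun i => i < m) (iota 0 n) = minn m n.
Proof.
elim: n => [|n IHn]; first by rewrite minn0.
by rewrite -[n.+1]addn1 iotaD count_cat IHn /= addn0; case: (ltnP n m) => ?; lia.
Qed.

Section Arithmetic.
Variable g : nat -> nat.
Implicit Types (env : seq nat) (x y : nat).

Lemma eval_epred env x : eval g (x :: env) epred = x.-1.
Proof. by rewrite /epred -lock /=; case: x. Qed.

Lemma eval_eadd env x y : eval g [:: x, y & env] eadd = x + y.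
Proof. by rewrite /eadd -lock /=; elim: y => [|y IHy] /=; rewrite ?addn0 ?IHy ?addnS. Qed.

Lemma eval_esub env x y : eval g [:: x, y & env] esub = x - y.
Proof. by rewrite /esub -lock /=; elim: y => [|y IHy] /=; rewrite ?subn0 // eval_epred IHy subnS. Qed.

Lemma eval_emul env x y : eval g [:: x, y & env] emul = x * y.
Proof.
by rewrite /emul -lock /=; elim: y => [|y IHy] /=; rewrite ?muln0 // eval_eadd IHy mulnS addnC.
Qed.

Lemma eval_eleq env x y : eval g [:: x, y & env] eleq = (x <= y).
Proof. by rewrite /eleq -lock /= eval_esub /leq; case: (x - y == 0). Qed.

Lemma eval_eexp2 env x : eval g (x :: env) eexp2 = 2 ^ x.
Proof. by rewrite /eexp2 -lock /=; elim: x => //= x IHx; rewrite eval_eadd IHx expnS mul2n addnn. Qed.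

Lemma eval_ediv env x y : 0 < y -> eval g [:: x, y & env] ediv = x %/ y.
Proof.
move=> y_gt0; rewrite /ediv -lock /= (@iteri_count (fun i => i < x %/ y)).
  by rewrite count_ltn_iota; apply/minn_idPl; exact: leq_div.
by move=> i a /=; rewrite eval_emul eval_eleq leq_divRL //; case: (i.+1 * y <= x).
Qed.

Lemma eval_emod env x y : 0 < y -> eval g [:: x, y & env] emod = x %% y.
Proof. by move=> y_gt0; rewrite /emod -lock /= eval_esub eval_emul eval_ediv // {1}(divn_eq x y) mulnC addKn. Qed.

Lemma eval_emax env x y : eval g [:: x, y & env] emax = maxn x y.
Proof. by rewrite /emax -lock /= eval_eadd eval_esub; lia. Qed.

Lemma eval_emin env x y : eval g [:: x, y & env] emin = minn x y.
Proof. by rewrite /emin -lock /= !eval_esub; lia. Qed.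

End Arithmetic.

Lemma scode_cons h s : scode (h :: s) = 2 ^ h * (scode s).*2.+1.
Proof. by []. Qed.

Lemma scode_eq0 s : (scode s == 0) = (s == [::]).
Proof. by case: s => // h s; rewrite scode_cons muln_eq0 expn_eq0. Qed.

Lemma size_le_scode s : size s <= scode s.
Proof.
elim: s => // h s IHs; rewrite scode_cons /=.
apply: leq_trans (_ : (scode s).*2.+1 <= _); first by rewrite ltnS -addnn; lia.
by rewrite leq_pmull // expn_gt0.
Qed.

Lemma head_lt_scode h s : h < scode (h :: s).
Proof. by have /andP [] := CodeSeq.ltn_code (h :: s). Qed.

Lemma logn2_scode_cons h s : logn 2 (scode (h :: s)) = h.
Proof.
by rewrite scode_cons mulnC logn_Gauss ?pfactorK // coprime2n -addnn /= oddD addbb.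
Qed.

(* the head of [s] is the [2]-adic valuation of [scode s], found by counting
   the [i] with [2 ^ i.+1] dividing it *)
Definition ehead :=
  locked (EIter v0 EZero (EIf (call2 emod v2 (call1 eexp2 (ESucc v1))) EZero (ESucc v0) v0)).
Definition ebehead :=
  locked (call2 ediv (call1 epred (call2 ediv v0 (call1 eexp2 (call1 ehead v0)))) (enat 2)).
Definition econs := locked (call2 emul (call1 eexp2 v0) (ESucc (call2 eadd v1 v1))).
Definition edrop := locked (EIter v1 v0 (call1 ebehead v0)).
Definition enth := locked (call1 ehead (call2 edrop v0 v1)).
Definition esize := locked (EIter v0 EZero (EIf (call2 edrop v2 v1) EZero v0 (ESucc v0))).

Section Sequences.
Variable g : nat -> nat.
Implicit Types (env : seq nat) (c h i : nat).

Lemma eval_ehead env c : eval g (c :: env) ehead = head 0 (sdecode c).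
Proof.
rewrite -{1}(scodeK c); case: (sdecode c) => [|h s]; first by rewrite /ehead -lock.
have code_gt0 : 0 < scode (h :: s) by rewrite lt0n scode_eq0.
rewrite /ehead -lock /= (@iteri_count (fun i => i < h)).
  by rewrite count_ltn_iota; apply/minn_idPl; exact/ltnW/head_lt_scode.
move=> i a /=; rewrite eval_eexp2 eval_emod ?expn_gt0 // -/(dvdn _ _) pfactor_dvdn //.
by rewrite logn2_scode_cons; case: (i < h).
Qed.

Lemma eval_ebehead env c : eval g (c :: env) ebehead = scode (behead (sdecode c)).
Proof.
rewrite /ebehead -lock /= eval_eexp2 eval_ehead -{1}(scodeK c).
case: (sdecode c) => [|h s] /=; first by rewrite eval_ediv // eval_epred eval_ediv.
by rewrite !eval_ediv ?expn_gt0 // mulKn ?expn_gt0 // eval_epred /= -mul2n mulKn.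
Qed.

Lemma eval_econs env h c : eval g [:: h, c & env] econs = scode (h :: sdecode c).
Proof. by rewrite /econs -lock [LHS]/= eval_emul eval_eexp2 eval_eadd scode_cons scodeK addnn. Qed.

Lemma eval_edrop env c i : eval g [:: c, i & env] edrop = scode (drop i (sdecode c)).
Proof.
rewrite /edrop -lock /=; elim: i => [|i IHi]; first by rewrite drop0 scodeK.
by rewrite iteriS eval_ebehead IHi sdecodeK -drop1 drop_drop add1n.
Qed.

Lemma eval_enth env c i : eval g [:: c, i & env] enth = nth 0 (sdecode c) i.
Proof.
rewrite /enth -lock /= eval_edrop eval_ehead sdecodeK.
by case: (ltnP i (size (sdecode c))) => ?; rewrite -nth0 nth_drop addn0.
Qed.

Lemma eval_esize env c : eval g (c :: env) esize = size (sdecode c).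
Proof.
rewrite /esize -lock /= (@iteri_count (fun i => i < size (sdecode c))).
  by rewrite count_ltn_iota; apply/minn_idPl; rewrite -{2}(scodeK c) size_le_scode.
move=> i a /=; rewrite eval_edrop scode_eq0 -size_eq0 size_drop subn_eq0 leqNgt.
by case: (i < size _).
Qed.

End Sequences.

(* [emkseq m] on [n; p1; p2; p3] prepends [m (n.-1 - i; p1; p2; p3)] at step [i] *)
Definition emkseq m :=
  locked (EIter v0 EZero (call2 econs (ECall m (call2 esub (call1 epred v2) v1) v3 v4 v5) v0)).
(* the accumulator stays [n] until the first hit *)
Definition efind m :=
  locked (EIter v0 v0 (EIf v0 v2 (EIf (ECall m v1 v3 v4 v5) EZero v0 v1) v0)).

Section Combinators.
Variables (g : nat -> nat) (m : expr) (G : nat -> nat) (p1 p2 p3 : nat).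
Hypothesis eval_m : forall i, eval g [:: i; p1; p2; p3] m = G i.

Lemma eval_emkseq n : eval g [:: n; p1; p2; p3] (emkseq m) = scode (mkseq G n).
Proof.
rewrite /emkseq -lock /=.
suff /(_ n (leqnn n)) : forall k, k <= n -> iteri k (fun i acc => eval g
       [:: eval g [:: eval g [:: eval g [:: n; 0; 0; 0] epred; i; 0; 0] esub; p1; p2; p3] m;
           acc; 0; 0] econs) 0 = scode (map G (iota (n - k) k)) by rewrite subnn.
elim=> [|k IHk] lt_k; first by rewrite subn0.
rewrite iteriS IHk ?(ltnW lt_k) // eval_epred eval_esub eval_m eval_econs sdecodeK.
have -> : n - k = (n - k.+1).+1 by lia.
by have -> : n.-1 - k = n - k.+1 by lia.
Qed.

Lemma eval_efind n :
  eval g [:: n; p1; p2; p3] (efind m) = find (fun i => G i != 0) (iota 0 n).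
Proof.
rewrite /efind -lock /=; set P := fun i => G i != 0.
suff /(_ n (leqnn n)) : forall k, k <= n -> iteri k (fun i acc =>
   if acc == n then (if eval g [:: i; p1; p2; p3] m == 0 then acc else i) else acc) n
   = if has P (iota 0 k) then find P (iota 0 k) else n.
  by move=> ->; case: ifP => // /negbT /hasNfind ->; rewrite size_iota.
elim=> [|k IHk] lt_k //.
rewrite iteriS IHk ?(ltnW lt_k) // -[k.+1]addn1 iotaD has_cat find_cat /= orbF.
case has_k: (has P (iota 0 k)).
  have : find P (iota 0 k) < k by rewrite -{2}(size_iota 0 k) -has_find.
  by case: eqP => //; lia.
by rewrite eqxx eval_m size_iota /P; case: (G k) => //= *; rewrite addn0.
Qed.

End Combinators.

Definition etake :=
  locked (ECall (emkseq (call2 enth v1 v0)) (call2 emin v1 (call1 esize v0)) v0 EZero EZero).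
Definition eset_nth :=
  locked (ECall (emkseq (EIf v0 v2 v3 (call2 enth v1 v0))) (call2 emax (call1 esize v0) (ESucc v1))
    v0 v1 v2).

Lemma take_mkseq (s : seq nat) t : take t s = mkseq (nth 0 s) (minn t (size s)).
Proof. by rewrite /mkseq map_nth_iota0 ?geq_minr // take_min take_size. Qed.

Section Updates.
Variable g : nat -> nat.

Lemma eval_etake env c t : eval g [:: c, t & env] etake = scode (take t (sdecode c)).
Proof.
rewrite /etake -lock [LHS]/= eval_esize eval_emin (@eval_emkseq _ _ (nth 0 (sdecode c))).
  by rewrite take_mkseq.
by move=> i /=; rewrite eval_enth.
Qed.

Lemma nth_eval_eset_nth env l a v i :
  nth 0 (sdecode (eval g [:: l, a, v & env] eset_nth)) i =
  if i == a then v else nth 0 (sdecode l) i.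
Proof.
rewrite /eset_nth -lock [eval _ _ (ECall _ _ _ _ _)]/= eval_esize eval_emax.
rewrite (@eval_emkseq _ _ (fun i => if i == a then v else nth 0 (sdecode l) i)); last first.
  by move=> j /=; rewrite eval_enth.
rewrite sdecodeK; case: (ltnP i (maxn (size (sdecode l)) a.+1)) => [lt_i|]; first by rewrite nth_mkseq.
rewrite geq_max => /andP [le_l lt_a]; rewrite nth_default ?size_mkseq ?geq_max ?le_l //.
by rewrite (gtn_eqF lt_a) nth_default.
Qed.

End Updates.

(** * Simulating register machines *)

Inductive mstate := Running of state | Halted | Stuck.

Definition mstep p o (x : mstate) : mstate :=
  if x is Running st then
    if halted p st then Halted else if step p o st is Some st' then Running st' else Stuck
  else x.

Definition is_halted (x : mstate) : bool := if x is Halted then true else false.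

Lemma run_mstep p o s st : isSome (run p o s st) = is_halted (iter s (mstep p o) (Running st)).
Proof.
have iter_halted k : iter k (mstep p o) Halted = Halted by exact: iter_fix.
have iter_stuck k : iter k (mstep p o) Stuck = Stuck by exact: iter_fix.
elim: s st => // s IHs st; rewrite iterSr /=.
case: ifP => _; first by rewrite iter_halted.
by case: (step p o st) => [st'|]; rewrite ?IHs ?iter_stuck.
Qed.

Lemma instr_of_natE ic : instr_of_nat ic =
  let l := sdecode ic in let h := nth 0 l 0 in let a := nth 0 l 1 in
  let b := nth 0 l 2 in let q := nth 0 l 3 in
  if size l == 2 then
    if h == 0 then IZ a else if h == 1 then IS a else if h == 4 then IO a else IZ 0
  else if size l == 3 then (if h == 2 then IT a b else IZ 0)
  else if size l == 4 then (if h == 3 then IJ a b q else IZ 0) else IZ 0.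
Proof.
rewrite /instr_of_nat /=; case: (sdecode ic) => [|x [|y [|z [|u [|v l]]]]] //=;
by do 5? case: x => [|x] //.
Qed.

(* A running state is coded as [scode [:: 0; pc; L]], where the list coded by [L]
   holds the registers (all zero beyond its length). *)
Definition encodes (x : mstate) (c : nat) : Prop :=
  match x with
  | Running (pc, r) => exists2 L, c = scode [:: 0; pc; L] & forall i, r i = nth 0 (sdecode L) i
  | Halted => nth 0 (sdecode c) 0 = 1
  | Stuck => nth 0 (sdecode c) 0 = 2
  end.

Definition etriple e1 e2 := locked (call2 econs EZero (call2 econs e1 (call2 econs e2 EZero))).

Lemma eval_etriple g env e1 e2 :
  eval g env (etriple e1 e2) = scode [:: 0; eval g env e1; eval g env e2].
Proof. by rewrite /etriple -lock /= !eval_econs !sdecodeK. Qed.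

(* on [ic; pc; L; tau]: one step of the instruction coded by [ic] with oracle [tau] *)
Definition eexec_instr :=
  let len := call1 esize v0 in let opc := call2 enth v0 EZero in
  let a := call2 enth v0 (enat 1) in let b := call2 enth v0 (enat 2) in
  let q := call2 enth v0 (enat 3) in
  let Ra := call2 enth v2 a in let Rb := call2 enth v2 b in let pc' := ESucc v1 in
  let do_IZ := etriple pc' (call3 eset_nth v2 a EZero) in
  let do_IS := etriple pc' (call3 eset_nth v2 a (ESucc Ra)) in
  let do_IT := etriple pc' (call3 eset_nth v2 b Ra) in
  let do_IJ := etriple (EIf Ra Rb q pc') v2 in
  let do_IO := EIf (call2 eleq (call1 esize v3) Ra) (enat 1) (call2 econs (enat 2) EZero)
                 (etriple pc' (call3 eset_nth v2 a (call2 enth v3 Ra))) in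
  let do_default := etriple pc' (call3 eset_nth v2 EZero EZero) in
  locked (EIf len (enat 2)
            (EIf opc EZero do_IZ (EIf opc (enat 1) do_IS (EIf opc (enat 4) do_IO do_default)))
         (EIf len (enat 3) (EIf opc (enat 2) do_IT do_default)
         (EIf len (enat 4) (EIf opc (enat 3) do_IJ do_default) do_default))).

(* [estep], [emstep] and [econv] take the arguments [pc; L; n; tau], [c; n; tau] and
   [n; tau], where [n] indexes the machine and [c] encodes an [mstate] *)
Definition estep :=
  locked (EIf (call2 eleq (call1 esize v2) v0) (enat 1) (call2 econs (enat 1) EZero)
    (ECall eexec_instr (call2 enth v2 v0) v0 v1 v3)).

Definition emstep :=
  locked (EIf (call2 enth v0 EZero) EZero
    (ECall estep (call2 enth v0 (enat 1)) (call2 enth v0 (enat 2)) v1 v2) v0).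

Definition econv :=
  locked (EIf (call2 enth (EIter (call1 esize v1) (etriple EZero (call2 econs v0 EZero))
                             (call3 emstep v0 v2 v3)) EZero)
    (enat 1) (enat 1) EZero).

Arguments scode : simpl never.
Arguments sdecode : simpl never.

Lemma nat_of_bool_eq1 (b : bool) : (b == 1 :> nat) = b.
Proof. by case: b. Qed.

Section Simulation.
Variable g : nat -> nat.

Lemma eval_eexec_instr ic pc (r : nat -> nat) L tau :
  (forall i, r i = nth 0 (sdecode L) i) ->
  encodes (if exec_instr (str_oracle (sdecode tau)) (instr_of_nat ic) (pc, r) is Some st
           then Running st else Stuck)
          (eval g [:: ic; pc; L; tau] eexec_instr).
Proof.
move=> rL; rewrite instr_of_natE /eexec_instr -lock /=.
rewrite ?eval_etriple /= !eval_esize !eval_enth eval_eleq nat_of_bool_eq1 -!rL /str_oracle leqNgt if_neg.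
repeat case: ifP => ?; rewrite /= ?eval_econs ?sdecodeK //;
by eexists; rewrite // => i /=; rewrite ?nth_eval_eset_nth ?eval_enth ?updE ?rL.
Qed.

Lemma eval_emstep x c n tau env : encodes x c ->
  encodes (mstep (machine n) (str_oracle (sdecode tau)) x)
          (eval g [:: c, n, tau & env] emstep).
Proof.
rewrite /emstep -lock; case: x => [[pc r]||] /=; last 2 first.
- by move=> c_halt; rewrite eval_enth c_halt /= c_halt.
- by move=> c_stuck; rewrite eval_enth c_stuck /= c_stuck.
case=> L -> rL; rewrite !eval_enth sdecodeK /= /estep -lock /= eval_esize eval_eleq eval_enth.
rewrite /halted /= size_map; case: ifP => [|running] /=; first by rewrite eval_econs.
by rewrite /machine (nth_map 0) ?ltnNge ?running //; exact: eval_eexec_instr.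
Qed.

Lemma encodes_halted x c : encodes x c -> (nth 0 (sdecode c) 0 == 1) = is_halted x.
Proof. by case: x => [[pc r]||] /= => [[L -> _]|->|->] //; rewrite sdecodeK. Qed.

Lemma eval_econv env n tau : eval g [:: n, tau & env] econv = conv n (sdecode tau).
Proof.
rewrite /econv -lock /= eval_esize eval_etriple /= eval_econs eval_enth /conv run_mstep.
set p := machine n; set o := str_oracle (sdecode tau).
suff /(_ (size (sdecode tau))) /encodes_halted <- : forall k, encodes
    (iter k (mstep p o) (Running (init n)))
    (iteri k (fun _ acc => eval g [:: acc; n; tau; 0] emstep) (scode [:: 0; 0; scode [:: n]])).
  by case: (_ == 1).
elim=> [|k IHk] /=; last exact: eval_emstep.
by exists (scode [:: n]) => // i; rewrite sdecodeK; case: i => [|[|i]].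
Qed.

End Simulation.

(** * The jump *)

Definition emu_find :=
  locked (ECall (efind (call2 econv v1 (call2 etake v2 v0))) (ESucc (call1 esize v1)) v0 v1 EZero).
Definition et_step :=
  locked (ELet (call2 emu_find v2 v0)
    (EIf (call2 eleq v0 (call1 esize v1)) (enat 1) (call2 emax (ESucc v2) v0) (ESucc v2))).
Definition etseq := locked (EIter (ESucc v1) (enat 1) (call3 et_step v2 v0 v1)).
Definition ejk :=
  locked (ECall (efind (EIf (call2 eleq (call2 etseq v1 v0) (call1 esize v1)) (enat 1) EZero (enat 1)))
    (ESucc (call1 esize v0)) v0 EZero EZero).
Definition eJ :=
  locked (ECall (emkseq (call2 etake v1 (call2 etseq v1 v0))) (call1 ejk v0) v0 EZero EZero).
Definition eJT_dec :=
  locked (EIf v0 EZero (EOracle EZero)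
    (ELet (call2 enth v0 (call1 epred (call1 esize v0)))
      (EIf (EOracle v0) EZero EZero (EIf (call1 eJ v0) v1 (enat 1) EZero)))).

Lemma nat_of_bool_neq0 (b : bool) : (b != 0 :> nat) = b.
Proof. by case: b. Qed.

Section Jump.
Variable g : nat -> nat.
Implicit Types (env : seq nat) (tau : nat).

Lemma eval_emu_find env n tau : eval g [:: n, tau & env] emu_find = mu_find n (sdecode tau).
Proof.
rewrite /emu_find -lock [LHS]/= eval_esize.
rewrite (@eval_efind _ _ (fun t => conv n (take t (sdecode tau)))); last first.
  by move=> t /=; rewrite eval_etake eval_econv sdecodeK.
by apply: eq_find => t; rewrite nat_of_bool_neq0.
Qed.

Lemma eval_et_step env tau p n : eval g [:: tau, p, n & env] et_step = t_step (sdecode tau) p n.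
Proof.
rewrite /et_step -lock /= eval_emu_find eval_esize eval_eleq eval_emax /t_step mu_tE.
by case: (mu_find n (sdecode tau) <= size (sdecode tau)).
Qed.

Lemma eval_etseq env tau m : eval g [:: tau, m & env] etseq = tseq (sdecode tau) m.
Proof.
rewrite /etseq -lock /=; elim: m => [|m IHm]; first by rewrite /= eval_et_step.
by rewrite iteriS IHm eval_et_step.
Qed.

Lemma eval_ejk env tau : eval g (tau :: env) ejk = jk (sdecode tau).
Proof.
rewrite /ejk -lock [LHS]/= eval_esize.
rewrite (@eval_efind _ _ (fun k => size (sdecode tau) < tseq (sdecode tau) k)); last first.
  by move=> k /=; rewrite eval_etseq eval_esize eval_eleq ltnNge; case: (_ <= _).
by apply: eq_find => k; rewrite nat_of_bool_neq0.
Qed.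

Lemma eval_eJ env tau : eval g (tau :: env) eJ = scode (J (sdecode tau)).
Proof.
rewrite /eJ -lock [LHS]/= eval_ejk.
rewrite (@eval_emkseq _ _ (fun i => scode (take (tseq (sdecode tau) i) (sdecode tau)))) //.
by move=> i /=; rewrite eval_etseq eval_etake.
Qed.

End Jump.

Lemma eval_eJT_dec T x : eval (query T) [:: x] eJT_dec = JT_dec T x.
Proof.
rewrite /eJT_dec -lock /= /JT_dec /query.
case: eqP => [->|x_neq0]; first by [].
have : sdecode x != [::] by apply/eqP => x_nil; apply: x_neq0; rewrite -(scodeK x) x_nil.
rewrite !eval_esize eval_epred eval_enth nth_last.
case x_def: (sdecode x) => [|a l] // _; case: (T _) => //=.
rewrite eval_eJ -[X in _ == X](scodeK x) x_def (inj_eq (can_inj sdecodeK)).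
by case: (_ == _).
Qed.

Theorem lemma4p8 (T : pred (seq nat)) :
  is_tree (fun s => T s) -> is_tree (JT T) /\ computable_in T (JT T).
Proof.
move=> treeT; split; first exact: JT_tree.
exact: computable_in_of_eval (eval_eJT_dec T) (fun x => JT_decP x treeT).
Qed.
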